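(* For every $n\ge1$, $N(0)=\#\Big\{(k_1,\dots,k_n)\in\mathbb{Z}^n:0\le k_i\le s_i-2,\ \sum_{i=1}^n\frac{k_i}{s_i}\le1\Big\}-1$.
   Context: Sylvester numbers: $s_0=2$, $s_{k+1}=1+\prod_{i=0}^ks_i$. Fix $n\ge1$, $d=\prod_{i=0}^ns_i$, $a_i=d/s_i$ for $0\le i\le n$, $a_{n+1}=1$. For $\ell\in\{0,\dots,d-1\}$ let $\tilde\theta_i(\ell)=\{\ell/s_i\}$ (fractional part) for $0\le i\le n$ and $\tilde\theta_{n+1}(\ell)=\ell/d$; $T_0(\ell)=\{i\in\{0,\dots,n+1\}:\tilde\theta_i(\ell)=0\}$, $T_1(\ell)=\{0,\dots,n+1\}\setminus T_0(\ell)$; $A(\ell)=\sum_{i\in T_1(\ell)}(\frac d2-a_i)$, $B(\ell)=\sum_{i\in T_1(\ell)}(d\tilde\theta_i(\ell)-\frac d2)$. $N(\ell)$ is the number of integer tuples $(k_i)_{i\in T_0(\ell)}$ with $0\le k_i\le s_i-2$ for $0\le i\le n$ and $0\le k_{n+1}\le d-2$ (if $n+1\in T_0(\ell)$), such that $A(\ell)+\sum_{i\in T_0(\ell)}k_ia_i=d$ and $B(\ell)=0$ (so $N(\ell)=0$ if $B(\ell)\ne0$). *)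

From HB Require Import structures.
From mathcomp Require Import all_boot all_order all_algebra.
Unset Printing Implicit Defensive.
Import Order.TTheory GRing.Theory Num.Theory.

Fixpoint sylv_seq (k : nat) : seq nat :=
  match k with
  | 0 => [:: 2]
  | k'.+1 => let s := sylv_seq k' in rcons s (1 + \prod_(x <- s) x)
  end.

Definition sylv (k : nat) : nat := nth 0 (sylv_seq k) k.

Definition dS (n : nat) : nat := \prod_(i < n.+1) sylv i.

(* Indices 0..n+1 are represented by 'I_(n.+2). *)
Definition aS (n : nat) (i : 'I_(n.+2)) : nat :=
  if (i <= n)%N then dS n %/ sylv i else 1.

Local Open Scope ring_scope.

(* theta~_i(l) = {l / s_i} for i <= n (for natural l this is (l mod s_i)/s_i),
   theta~_(n+1)(l) = l / d *)
Definition theta (n l : nat) (i : 'I_(n.+2)) : rat :=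
  if (i <= n)%N then (l %% sylv i)%:R / (sylv i)%:R
  else l%:R / (dS n)%:R.

Definition T0 (n l : nat) : {set 'I_(n.+2)} := [set i | theta n l i == 0].
Definition T1 (n l : nat) : {set 'I_(n.+2)} := ~: T0 n l.

Definition Aq (n l : nat) : rat :=
  \sum_(i in T1 n l) ((dS n)%:R / 2 - (aS n i)%:R).
Definition Bq (n l : nat) : rat :=
  \sum_(i in T1 n l) ((dS n)%:R * theta n l i - (dS n)%:R / 2).

Definition kbound (n : nat) (i : 'I_(n.+2)) : nat :=
  if (i <= n)%N then (sylv i - 2)%N else (dS n - 2)%N.

(* N(l): tuples (k_i)_(i in T0) are encoded as functions on all of 0..n+1
   that vanish outside T0 (values in 'I_d, which contains every admissible
   value since all bounds are < d). *)
Definition N (n l : nat) : nat :=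
  #|[set k : {ffun 'I_(n.+2) -> 'I_(dS n)} |
      [forall i, if i \in T0 n l then (k i <= kbound n i)%N
                 else (nat_of_ord (k i) == 0%N)]
      && (Aq n l + \sum_(i in T0 n l) (k i)%:R * (aS n i)%:R == (dS n)%:R)
      && (Bq n l == 0)]|.

(* #{(k_1..k_n) in Z^n : 0 <= k_i <= s_i - 2, sum_i k_i/s_i <= 1};
   index j : 'I_n stands for i = j+1. Values lie in 'I_(dS n) since s_i - 2 < d. *)
Definition Mcount (n : nat) : nat :=
  #|[set k : {ffun 'I_n -> 'I_(dS n)} |
      [forall j, (k j <= sylv j.+1 - 2)%N]
      && (\sum_(j < n) (k j)%:R / (sylv j.+1)%:R <= (1 : rat))]|.

From mathcomp Require Import all_boot all_order all_algebra zify.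
Import Order.TTheory GRing.Theory Num.Theory.

(* At l = 0 every theta_i vanishes, so T_0 is everything and A = B = 0.
   Since s_0 = 2 divides a_i = d / s_i for 1 <= i <= n, every nonzero
   (k_1, ..., k_n) has sum_i k_i a_i >= 2.  A tuple counted by N(0) has k_0 = 0
   (as s_0 - 2 = 0) and k_(n+1) = d - sum_(i=1..n) k_i a_i, so it is determined
   by its interior (k_1, ..., k_n), which is any tuple with k_i <= s_i - 2 and
   sum_i k_i a_i <= d except the zero tuple, the only one violating
   k_(n+1) <= d - 2.  Dividing by d, sum_i k_i a_i <= d reads sum_i k_i / s_i <= 1. *)

Section BorderedFunctions.

Variables (T : Type) (n : nat).

Definition inner_ord (j : 'I_n) : 'I_n.+2 := lift ord0 (lift ord_max j).

Lemma inner_ordE (j : 'I_n) : inner_ord j = j.+1 :> nat.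
Proof. by rewrite /= /bump /= (leqNgt n j) ltn_ord. Qed.

Lemma big_ord_border (R : Type) (idx : R) (op : Monoid.law idx) (F : 'I_n.+2 -> R) :
  \big[op/idx]_i F i =
  op (F ord0) (op (\big[op/idx]_(j < n) F (inner_ord j)) (F ord_max)).
Proof.
rewrite big_ord_recl big_ord_recr /=; congr (op _ (op _ (F _))); last exact: val_inj.
by apply: eq_bigr => j _; congr (F (lift _ _)); apply/val_inj/esym/lift_max.
Qed.

Definition border (m : {ffun 'I_n -> T}) (first last : T) : {ffun 'I_n.+2 -> T} :=
  [ffun i => if unlift ord0 i is Some i' then
               if unlift ord_max i' is Some j then m j else last
             else first].

Definition interior (k : {ffun 'I_n.+2 -> T}) : {ffun 'I_n -> T} :=
  [ffun j => k (inner_ord j)].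

Lemma border_first m x y : border m x y ord0 = x.
Proof. by rewrite ffunE unlift_none. Qed.

Lemma border_last m x y : border m x y ord_max = y.
Proof.
rewrite ffunE; have -> : (ord_max : 'I_n.+2) = lift ord0 ord_max by apply: val_inj.
by rewrite liftK unlift_none.
Qed.

Lemma border_inner m x y j : border m x y (inner_ord j) = m j.
Proof. by rewrite ffunE /inner_ord !liftK. Qed.

Lemma interior_border m x y : interior (border m x y) = m.
Proof. by apply/ffunP => j; rewrite ffunE border_inner. Qed.

Lemma border_interior k : border (interior k) (k ord0) (k ord_max) = k.
Proof.
apply/ffunP => i; rewrite ffunE.
case: unliftP => [i' ->|->] //; case: unliftP => [j ->|->]; first by rewrite ffunE.
by congr (k _); apply: val_inj.
Qed.

End BorderedFunctions.

Arguments inner_ord {n}.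
Arguments border {T n}.
Arguments interior {T n}.

Lemma sylv_gt0 i : 0 < sylv i.
Proof.
have pos_seq k : all (leq 1) (sylv_seq k).
  by elim: k => //= k IH; rewrite all_rcons IH andbT.
have size_seq k : size (sylv_seq k) = k.+1 by elim: k => //= k IH; rewrite size_rcons IH.
by apply: (allP (pos_seq i)); rewrite mem_nth // size_seq.
Qed.

Lemma dS_gt0 n : 0 < dS n.
Proof. by rewrite prodn_gt0 // => i; apply: sylv_gt0. Qed.

Lemma dS_div_sylv n (i : 'I_n.+1) : dS n %/ sylv i = \prod_(j < n.+1 | j != i) sylv j.
Proof. by rewrite /dS (bigD1 i) //= mulKn ?sylv_gt0. Qed.

Lemma sylv_dvd_dS n (i : 'I_n.+1) : sylv i %| dS n.
Proof. by rewrite /dS (bigD1 i) //= dvdn_mulr. Qed.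

Lemma dS_div_sylv_ge2 n (i : 'I_n.+1) : i != ord0 -> 2 <= dS n %/ sylv i.
Proof.
move=> i_neq0; rewrite dS_div_sylv (bigD1 ord0) 1?eq_sym //=.
by rewrite -[leqLHS]muln1 leq_mul // prodn_gt0 // => j; apply: sylv_gt0.
Qed.

Section Completion.

Variable n : nat.

Local Notation d := (dS n).

Definition ord_mod (x : nat) : 'I_d := Ordinal (ltn_pmod x (dS_gt0 n)).

Lemma ord_modE x : x < d -> ord_mod x = x :> nat.
Proof. exact: modn_small. Qed.

Definition zero_tuple : {ffun 'I_n -> 'I_d} := [ffun => ord_mod 0].

Definition weight_sum (m : {ffun 'I_n -> 'I_d}) : nat :=
  \sum_(j < n) m j * (d %/ sylv j.+1).

Definition is_M_tuple (m : {ffun 'I_n -> 'I_d}) : bool :=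
  [forall j, m j <= sylv j.+1 - 2] && (weight_sum m <= d).

Definition is_N_tuple (k : {ffun 'I_n.+2 -> 'I_d}) : bool :=
  [forall i, k i <= kbound n i] && (\sum_i k i * aS n i == d).

Definition completion (m : {ffun 'I_n -> 'I_d}) : {ffun 'I_n.+2 -> 'I_d} :=
  border m (ord_mod 0) (ord_mod (d - weight_sum m)).

Lemma aS_inner j : aS n (inner_ord j) = d %/ sylv j.+1.
Proof. by rewrite /aS inner_ordE ltn_ord. Qed.

Lemma kbound_inner j : kbound n (inner_ord j) = sylv j.+1 - 2.
Proof. by rewrite /kbound inner_ordE ltn_ord. Qed.

Lemma aS_last : aS n ord_max = 1.
Proof. by rewrite /aS /= ltnn. Qed.

Lemma kbound_last : kbound n ord_max = d - 2.
Proof. by rewrite /kbound /= ltnn. Qed.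

Lemma weight_sum_ge2 m : m != zero_tuple -> 2 <= weight_sum m.
Proof.
move=> m_neq0; have [j m_j_gt0] : exists j, 0 < m j.
  apply/existsP; apply: contraR m_neq0 => /existsPn m_eq0.
  apply/eqP/ffunP => j; apply/val_inj; rewrite ffunE /= mod0n.
  by apply/eqP; rewrite -leqn0 leqNgt m_eq0.
rewrite /weight_sum (bigD1 j) //= (leq_trans _ (leq_addr _ _)) //.
have := dS_div_sylv_ge2 n (lift ord0 j); rewrite lift0 => /(_ isT) w_ge2.
by rewrite (leq_trans w_ge2) // leq_pmull.
Qed.

Lemma sum_aS_border (k : {ffun 'I_n.+2 -> 'I_d}) :
  \sum_i k i * aS n i = k ord0 * aS n ord0 + weight_sum (interior k) + k ord_max.
Proof.
rewrite big_ord_border /= aS_last muln1 addnA; congr (_ + _ + _).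
by apply: eq_bigr => j _; rewrite ffunE aS_inner.
Qed.

Lemma N_tuple_completion m :
  is_M_tuple m -> m != zero_tuple -> is_N_tuple (completion m).
Proof.
move=> /andP[/forallP m_le m_sum] /weight_sum_ge2 sum_ge2.
have d_ge2 := leq_trans sum_ge2 m_sum.
have last_val : completion m ord_max = d - weight_sum m :> nat.
  by rewrite border_last ord_modE //; lia.
apply/andP; split.
  apply/forallP => i; case: (unliftP ord0 i) => [i' ->|->]; last first.
    by rewrite border_first /= mod0n.
  case: (unliftP ord_max i') => [j ->|->].
    by rewrite -/(inner_ord j) border_inner kbound_inner.
  have -> : lift ord0 ord_max = ord_max :> 'I_n.+2 by apply: val_inj.
  by rewrite last_val kbound_last; lia.
rewrite sum_aS_border interior_border border_first last_val /= mod0n mul0n.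
by apply/eqP; lia.
Qed.

Lemma weight_sum_zero : weight_sum zero_tuple = 0.
Proof. by rewrite /weight_sum big1 // => j _; rewrite ffunE /= mod0n. Qed.

Lemma interior_completion m : interior (completion m) = m.
Proof. exact: interior_border. Qed.

Lemma N_tuple_interior k :
  is_N_tuple k ->
  [/\ is_M_tuple (interior k), interior k != zero_tuple & completion (interior k) = k].
Proof.
move=> /andP[/forallP k_le /eqP].
have k_first : k ord0 = 0 :> nat by have := k_le ord0; rewrite leqn0 => /eqP.
have k_last := k_le ord_max; rewrite kbound_last in k_last.
have d_ge2 : 2 <= d := dvdn_leq (dS_gt0 n) (sylv_dvd_dS n ord0).
rewrite sum_aS_border k_first mul0n add0n => sum_eq.
have sum_ge2 : 2 <= weight_sum (interior k) by lia.
split.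
- apply/andP; split; last by lia.
  by apply/forallP => j; rewrite ffunE -kbound_inner.
- by apply: contraTneq sum_ge2 => ->; rewrite weight_sum_zero.
- rewrite -[RHS]border_interior; congr border; apply/val_inj.
    by rewrite /= mod0n k_first.
  by rewrite /= modn_small; lia.
Qed.

Lemma N_tuples_completion :
  [set k | is_N_tuple k] = completion @: ([set m | is_M_tuple m] :\ zero_tuple).
Proof.
apply/setP => k; rewrite inE; apply/idP/imsetP => [k_N | [m]].
  have [m_M m_neq0 k_eq] := N_tuple_interior _ k_N.
  by exists (interior k); rewrite // !inE m_neq0.
by rewrite !inE => /andP[m_neq0 m_M] ->; apply: N_tuple_completion.
Qed.

Lemma card_M_tuples : #|[set m | is_M_tuple m]| = #|[set k | is_N_tuple k]| + 1.
Proof.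
have zero_M : zero_tuple \in [set m | is_M_tuple m].
  rewrite inE /is_M_tuple weight_sum_zero leq0n andbT.
  by apply/forallP => j; rewrite ffunE /= mod0n.
rewrite N_tuples_completion card_imset; last exact: can_inj interior_completion.
by rewrite (cardsD1 zero_tuple) zero_M addnC.
Qed.

End Completion.

Local Open Scope ring_scope.

Lemma N0E n : N n 0 = #|[set k | is_N_tuple n k]|.
Proof.
have in_T0 i : i \in T0 n 0 by rewrite inE /theta mod0n !mul0r if_same.
have T1_empty : T1 n 0 = set0 by apply/setP => i; rewrite /T1 in_setC in_T0 in_set0.
apply: eq_card => k; rewrite !inE /Aq /Bq T1_empty !big_set0 add0r eqxx andbT.
congr (_ && _); first by apply: eq_forallb => i; rewrite in_T0.
rewrite [in LHS](eq_bigl xpredT) => [|i]; last by rewrite in_T0.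
rewrite -(eqr_nat rat) natr_sum; congr (_ == _).
by apply: eq_big => // i _; rewrite natrM.
Qed.

Lemma McountE n : Mcount n = #|[set m | is_M_tuple n m]|.
Proof.
apply: eq_card => m; rewrite !inE /is_M_tuple; congr (_ && _).
rewrite -(@ler_pM2l _ (dS n)%:R) ?ltr0n ?dS_gt0 // mulr1 -(ler_nat rat) natr_sum.
rewrite mulr_sumr; congr (_ <= _); apply: eq_bigr => j _.
have sylv_dvd : (sylv j.+1 %| dS n)%N by rewrite -[j.+1]lift0 sylv_dvd_dS.
rewrite natrM natr_div // ?unitfE ?pnatr_eq0 -?lt0n ?sylv_gt0 //.
by rewrite mulrCA.
Qed.

Theorem lemma6p7 (n : nat) (hn : (1 <= n)%N) :
  ((N n 0)%:Z = (Mcount n)%:Z - 1)%R.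
Proof.
by rewrite N0E McountE card_M_tuples PoszD addrK.
Qed.
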